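(* Let $\mathbb G$ be a finite (possibly non-abelian) group with operation $+$ and $n\ge1$. Consider the function group-add: Alice has $X\in\mathbb G^n$, Bob has $Y\in\mathbb G^n$, Charlie outputs $Z=X+Y$ (component-wise). For every $p_{XY}$ with full support on $\mathbb G^n\times\mathbb G^n$, any secure protocol satisfies \[H(M_{12}),\ H(M_{23}),\ H(M_{31})\ge n\log|\mathbb G|,\] and $\rho(p_{XY},\text{group-add})\ge n\log|\mathbb G|$.
   Context: Setting: Alice (party 1) holds $X$, Bob (party 2) holds $Y$, $(X,Y)\sim p_{XY}$ on finite sets; Charlie (party 3) has no input and outputs $Z$, which should equal $f(X,Y)$ for the deterministic function $f$. In a protocol the parties, each with private randomness, exchange messages over multiple rounds on three pairwise private links, each message a codeword of a prefix-free code determined by previous messages on that link; the protocol terminates with probability 1 and may depend on $p_{XY}$. $M_{12},M_{23},M_{31}$ are the final transcripts on the Alice–Bob, Bob–Charlie, Charlie–Alice links; the view $V_i$ of party $i$ consists of the transcripts on its two links plus its input (Alice, Bob) or output (Charlie). A secure protocol satisfies correctness (Charlie outputs $f(x,y)$ on inputs $x,y$) and privacy (Markov chains $(M_{12},M_{31})-X-(Y,Z)$, $(M_{12},M_{23})-Y-(X,Z)$, $(M_{23},M_{31})-Z-(X,Y)$). $\rho(p_{XY},f)=\inf H(V_1,V_2,V_3|X,Y)$ over all secure protocols for $f$ with input distribution $p_{XY}$. Logs base 2. *)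

From HB Require Import structures.
From mathcomp Require Import all_boot all_order all_algebra all_fingroup.
From mathcomp Require Import all_classical all_reals all_analysis.

Set Implicit Arguments.
Unset Strict Implicit.
Unset Printing Implicit Defensive.

Import Order.TTheory GRing.Theory Num.Theory.
Local Open Scope classical_set_scope.
Local Open Scope ring_scope.

Definition word := seq bool.

Definition prefix_free (C : set word) : Prop :=
  forall u v, C u -> C v -> seq.prefix u v -> u = v.

(* The history of one link: the list, round by round, of the pair of
   messages sent on it in the two directions. *)
Definition lhist := seq (word * word).

(* One (synchronous) round: on each of the three links, one message in each
   direction (possibly the empty word).
     link 12 : (Alice -> Bob,     Bob -> Alice)
     link 23 : (Bob -> Charlie,   Charlie -> Bob)
     link 31 : (Charlie -> Alice, Alice -> Charlie) *)
Definition round := ((word * word) * (word * word) * (word * word))%type.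

Definition l12 (r : round) : word * word := r.1.1.
Definition l23 (r : round) : word * word := r.1.2.
Definition l31 (r : round) : word * word := r.2.

Definition eps_round : round := (([::], [::]), ([::], [::]), ([::], [::])).

Definition tr_of (l : round -> word * word) (h : seq round) : word :=
  flatten [seq (l r).1 ++ (l r).2 | r <- h].

(* In each round every party, using its
   private randomness, sends one message to each of the two other parties;
   its (joint) choice of the two messages is given by a probability kernel
   conditioned on everything it has seen so far (its input / nothing, and
   the histories of its two links) -- this is exactly the behaviour of a
   party with persistent private randomness. Each message on a directed link
   is a codeword of a prefix-free code determined by the previous messages
   on that link. *)
Record protocol (X Y Z : finType) (R : realType) := Protocol {
  codeAB : lhist -> set word;
  codeBA : lhist -> set word;
  codeBC : lhist -> set word;
  codeCB : lhist -> set word;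
  codeCA : lhist -> set word;
  codeAC : lhist -> set word;
  (* alice x h12 h31 (to Bob, to Charlie) *)
  alice : X -> lhist -> lhist -> word * word -> R;
  (* bob y h12 h23 (to Charlie, to Alice) *)
  bob : Y -> lhist -> lhist -> word * word -> R;
  (* charlie h23 h31 (to Alice, to Bob) *)
  charlie : lhist -> lhist -> word * word -> R;
  (* out m23 m31 z : Charlie's output distribution given his final transcripts *)
  out : word -> word -> Z -> R
}.

Section ProtocolSemantics.
Variables (X Y Z : finType) (R : realType).
Implicit Type P : protocol X Y Z R.

Definition valid_protocol P : Prop :=
  (forall h, prefix_free (codeAB P h)) /\ (forall h, prefix_free (codeBA P h)) /\
  (forall h, prefix_free (codeBC P h)) /\ (forall h, prefix_free (codeCB P h)) /\
  (forall h, prefix_free (codeCA P h)) /\ (forall h, prefix_free (codeAC P h)) /\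
  (forall x h12 h31,
     (forall m, 0 <= alice P x h12 h31 m) /\
     (\esum_(m in setT) (alice P x h12 h31 m)%:E = 1)%E /\
     (forall u v, 0 < alice P x h12 h31 (u, v) ->
        codeAB P h12 u /\ codeAC P h31 v)) /\
  (forall y h12 h23,
     (forall m, 0 <= bob P y h12 h23 m) /\
     (\esum_(m in setT) (bob P y h12 h23 m)%:E = 1)%E /\
     (forall u v, 0 < bob P y h12 h23 (u, v) ->
        codeBC P h23 u /\ codeBA P h12 v)) /\
  (forall h23 h31,
     (forall m, 0 <= charlie P h23 h31 m) /\
     (\esum_(m in setT) (charlie P h23 h31 m)%:E = 1)%E /\
     (forall u v, 0 < charlie P h23 h31 (u, v) ->
        codeCA P h31 u /\ codeCB P h23 v)) /\
  (forall m23 m31, (forall z, 0 <= out P m23 m31 z) /\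
     \sum_(z : Z) out P m23 m31 z = 1).

Definition step P (x : X) (y : Y) (h : seq round) (rd : round) : R :=
  alice P x (map l12 h) (map l31 h) ((l12 rd).1, (l31 rd).2) *
  bob P y (map l12 h) (map l23 h) ((l23 rd).1, (l12 rd).2) *
  charlie P (map l23 h) (map l31 h) ((l31 rd).1, (l23 rd).2).

Definition hprob P (x : X) (y : Y) (h : seq round) : R :=
  \prod_(k < size h) step P x y (take k h) (nth eps_round h k).

(* after history [h] the protocol has terminated: from now on every code
   on every link is {empty word}, so nothing more can ever be sent *)
Definition quiescent P (h : seq round) : Prop :=
  forall k, let h' := h ++ nseq k eps_round in
    codeAB P (map l12 h') = [set [::]] /\ codeBA P (map l12 h') = [set [::]] /\
    codeBC P (map l23 h') = [set [::]] /\ codeCB P (map l23 h') = [set [::]] /\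
    codeCA P (map l31 h') = [set [::]] /\ codeAC P (map l31 h') = [set [::]].

Definition complete_run P (h : seq round) : Prop :=
  quiescent P h /\ forall k, (k < size h)%N -> ~ quiescent P (take k h).

Definition terminates P : Prop :=
  forall x y, (\esum_(h in complete_run P) (hprob P x y h)%:E = 1)%E.

Definition cond_law P (x : X) (y : Y) (m12 m23 m31 : word) (z : Z) : \bar R :=
  \esum_(h in [set h | complete_run P h /\ tr_of l12 h = m12 /\
                       tr_of l23 h = m23 /\ tr_of l31 h = m31])
     (hprob P x y h * out P m23 m31 z)%:E.

Definition outcome := (X * Y * word * word * word * Z)%type.
Definition oX (o : outcome) : X := o.1.1.1.1.1.
Definition oY (o : outcome) : Y := o.1.1.1.1.2.
Definition oM12 (o : outcome) : word := o.1.1.1.2.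
Definition oM23 (o : outcome) : word := o.1.1.2.
Definition oM31 (o : outcome) : word := o.1.2.
Definition oZ (o : outcome) : Z := o.2.

Definition joint (p : X -> Y -> R) P (o : outcome) : \bar R :=
  ((p (oX o) (oY o))%:E * cond_law P (oX o) (oY o) (oM12 o) (oM23 o) (oM31 o) (oZ o))%E.

Definition V1 (o : outcome) := (oX o, oM12 o, oM31 o).
Definition V2 (o : outcome) := (oY o, oM12 o, oM23 o).
Definition V3 (o : outcome) := (oZ o, oM23 o, oM31 o).

End ProtocolSemantics.

Section Info.
Variables (R : realType) (T : choiceType).

Definition Pr (mu : T -> \bar R) (E : set T) : \bar R := \esum_(t in E) mu t.

Definition log2 (a : R) : R := ln a / ln 2.

Definition markov (mu : T -> \bar R) (TA TB TC : Type)
    (A : T -> TA) (B : T -> TB) (C : T -> TC) : Prop :=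
  forall a b c,
    (Pr mu [set t | A t = a /\ B t = b /\ C t = c] * Pr mu [set t | B t = b] =
     Pr mu [set t | A t = a /\ B t = b] * Pr mu [set t | B t = b /\ C t = c])%E.

Definition entropy (mu : T -> \bar R) (TA : choiceType) (A : T -> TA) : \bar R :=
  \esum_(a in [set: TA])
    (let q := fine (Pr mu [set t | A t = a]) in
     if q == 0 then 0 else - q * log2 q)%:E.

Definition cond_entropy (mu : T -> \bar R) (TA TB : choiceType)
    (A : T -> TA) (B : T -> TB) : \bar R :=
  \esum_(ab in [set: TA * TB])
    (let qab := fine (Pr mu [set t | A t = ab.1 /\ B t = ab.2]) in
     let qb := fine (Pr mu [set t | B t = ab.2]) in
     if qab == 0 then 0 else - qab * log2 (qab / qb))%:E.

End Info.

Section Security.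
Variables (X Y Z : finType) (R : realType).

Definition correct (f : X -> Y -> Z) (P : protocol X Y Z R) : Prop :=
  forall x y m12 m23 m31 z, (0 < cond_law P x y m12 m23 m31 z)%E -> z = f x y.

Definition private (p : X -> Y -> R) (P : protocol X Y Z R) : Prop :=
  let mu := joint p P in
  markov mu (fun o => (oM12 o, oM31 o)) (@oX X Y Z) (fun o => (oY o, oZ o)) /\
  markov mu (fun o => (oM12 o, oM23 o)) (@oY X Y Z) (fun o => (oX o, oZ o)) /\
  markov mu (fun o => (oM23 o, oM31 o)) (@oZ X Y Z) (fun o => (oX o, oY o)).

Definition secure (p : X -> Y -> R) (f : X -> Y -> Z) (P : protocol X Y Z R) : Prop :=
  valid_protocol P /\ terminates P /\ correct f P /\ private p P.

Definition views_entropy (p : X -> Y -> R) (P : protocol X Y Z R) : \bar R :=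
  cond_entropy (joint p P)
    (fun o => (@V1 X Y Z o, @V2 X Y Z o, @V3 X Y Z o))
    (fun o => (@oX X Y Z o, @oY X Y Z o)).

Definition rho (p : X -> Y -> R) (f : X -> Y -> Z) : \bar R :=
  ereal_inf [set views_entropy p P | P in [set P | secure p f P]].

Definition is_pmf (p : X -> Y -> R) : Prop :=
  (forall x y, 0 <= p x y) /\ \sum_(x : X) \sum_(y : Y) p x y = 1.

End Security.

(* component-wise group addition on G^n (G possibly non-abelian, written
   multiplicatively in MathComp) *)
Definition group_add (gT : finGroupType) (n : nat)
    (x y : {ffun 'I_n -> gT}) : {ffun 'I_n -> gT} :=
  [ffun i => (x i * y i)%g].

(* Write V for G^n and f for group-add; the proof only uses that f is cancellative on both sides.
   Privacy makes the law of each transcript, given the inputs (x, y), independent of (x, y): by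
   Alice's view M31 does not depend on y given x, by Charlie's view it depends on (x, y) only
   through f x y, and every value of f is reached from every x; likewise for M23 and M12.
   Conversely (M23, M31) determine Charlie's output f x y, and prefix-free parsing together with
   the rectangle property of runs shows that all three transcripts determine (x, y). Hence, for a
   transcript value w, the |V| inputs (x, y0) with y0 fixed split the law of M23 into |V| disjoint
   pieces of mass P(M31 = w | x, y0) each, so that probability is at most 1/|V|. All entropy
   bounds follow, the one on rho through P(V1, V2, V3 = v | X, Y) <= P(M31 = v31 | X, Y). *)

From Pilot Require Import Defs.
From HB Require Import structures.
From mathcomp Require Import all_boot all_order all_algebra all_fingroup.
From mathcomp Require Import all_classical all_reals all_analysis.
Import Order.TTheory GRing.Theory Num.Theory.

Set Implicit Arguments.
Unset Strict Implicit.
Unset Printing Implicit Defensive.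
Local Open Scope classical_set_scope.
Local Open Scope ring_scope.
Local Open Scope ereal_scope.

Lemma esum_setT_fin (R : realType) (T : finType) (a : T -> \bar R) :
  (forall i, 0 <= a i) -> \esum_(i in [set: T]) a i = \sum_(i : T) a i.
Proof.
move=> a0; rewrite esum_fset; [| exact: finite_finset | by move=> i _; exact: a0].
rewrite fsbig_finite; last exact: finite_finset.
apply: perm_big; apply: uniq_perm; [exact: finmap.fset_uniq | exact: index_enum_uniq |].
by move=> i; rewrite in_fset_set ?mem_index_enum ?in_setT //; exact: finite_finset.
Qed.

Lemma ge0_esum_distrr (R : realType) (T : choiceType) (S : set T) (a : T -> \bar R) (r : R) :
  (0 <= r)%R -> (forall i, 0 <= a i) ->
  r%:E * (\esum_(i in S) a i) = \esum_(i in S) (r%:E * a i).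
Proof.
move=> r0 a0; rewrite /esum -ereal_supZl //; last first.
  by apply/set0P; exists 0; exists set0; [exact: fsets_set0 | rewrite fsbig_set0].
congr ereal_sup; apply/seteqP; split => x /=.
- move=> [y [A [finA AS] <-] <-]; exists A => //.
  by rewrite !fsbig_finite // ge0_sume_distrr.
- move=> [A [finA AS] <-]; exists (\sum_(i \in A) a i); first by exists A.
  by rewrite !fsbig_finite // ge0_sume_distrr.
Qed.

Lemma sum_esum_disjoint_le (R : realType) (I : finType) (W : choiceType)
    (u : I -> W -> \bar R) (v : W -> \bar R) :
  (forall i w, 0 <= u i w) -> (forall i w, u i w <= v w) -> (forall w, 0 <= v w) ->
  (forall i j w, 0 < u i w -> 0 < u j w -> i = j) ->
  \sum_(i : I) \esum_(w in [set: W]) u i w <= \esum_(w in [set: W]) v w.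
Proof.
move=> u0 uv v0 u_disj; rewrite -esum_sum; last by move=> *; exact: u0.
apply: le_esum => w _.
have u_eq0 i : ~ 0 < u i w -> u i w = 0.
  by move=> /negP; rewrite -leNgt => ule0; apply/le_anti; rewrite ule0 u0.
have [[i ui_gt0]|none] := pselect (exists i, 0 < u i w).
  rewrite (bigD1 i) //= big1 ?adde0 // => j ji; apply: u_eq0 => uj_gt0.
  by move/eqP: ji; apply; exact: u_disj uj_gt0 ui_gt0.
by rewrite big1 // => i _; apply: u_eq0 => ?; apply: none; exists i.
Qed.

Section Probability.
Variables (R : realType) (T : choiceType) (mu : T -> \bar R).
Hypothesis mu_ge0 : forall t, 0 <= mu t.

Lemma Pr_ge0 E : 0 <= Pr mu E.
Proof. by apply: esum_ge0 => t _; exact: mu_ge0. Qed.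

Lemma le_Pr (E F : set T) : E `<=` F -> Pr mu E <= Pr mu F.
Proof.
move=> EF; rewrite /Pr [X in X <= _]esum_mkcond [X in _ <= X]esum_mkcond.
apply: le_esum => t _; case: (boolP (t \in E)) => tE; case: (boolP (t \in F)) => tF //.
by move/negP: tF; rewrite inE; move: tE; rewrite inE => /EF.
Qed.

Lemma eq_Pr_ae (E F : set T) :
  (forall t, 0 < mu t -> (E t <-> F t)) -> Pr mu E = Pr mu F.
Proof.
move=> EF; rewrite /Pr esum_mkcond [RHS]esum_mkcond; apply: eq_esum => t _.
have [/EF [EtFt FtEt]|mu_le0] := ltP 0 (mu t).
  by rewrite (_ : (t \in E) = (t \in F)) //; apply/idP/idP; rewrite !inE.
have -> : mu t = 0 by apply/le_anti; rewrite mu_le0 mu_ge0.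
by case: ifP; case: ifP.
Qed.

Lemma eq_Pr (E F : set T) : (forall t, E t <-> F t) -> Pr mu E = Pr mu F.
Proof. by move=> EF; apply: eq_Pr_ae => t _; exact: EF. Qed.

Lemma Pr_gt0P (E : set T) : 0 < Pr mu E -> exists t, E t /\ 0 < mu t.
Proof.
move=> PrE_gt0; apply: contrapT => none; move: PrE_gt0.
rewrite /Pr esum1 ?ltxx // => t Et; apply/le_anti; rewrite mu_ge0 andbT leNgt.
by apply/negP => mut_gt0; apply: none; exists t.
Qed.

Lemma Pr_partition (U : choiceType) (g : T -> U) (S : set U) (E : set T) :
  Pr mu (E `&` (g @^-1` S)) = \esum_(u in S) Pr mu (E `&` [set t | g t = u]).
Proof.
rewrite /Pr esum_esum; last by move=> *; exact: mu_ge0.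
rewrite (reindex_esum (E `&` (g @^-1` S)) _ (fun t => (g t, t))) //; split.
- by move=> t /= [Et St].
- by move=> t1 t2 _ _ [].
- by move=> [u t] /= [Su [Et gtu]]; exists t => //; rewrite gtu.
Qed.

Lemma Pr_partitionT (U : choiceType) (g : T -> U) (E : set T) :
  Pr mu E = \esum_(u in [set: U]) Pr mu (E `&` [set t | g t = u]).
Proof. by rewrite -Pr_partition; apply: eq_Pr => t; split=> [|[]//]. Qed.

Lemma Pr_fin_partition (U : finType) (g : T -> U) (E : set T) :
  Pr mu E = \sum_(u : U) Pr mu (E `&` [set t | g t = u]).
Proof. by rewrite (Pr_partitionT g) esum_setT_fin // => u; exact: Pr_ge0. Qed.

Hypothesis Pr_setT : Pr mu setT = 1.

Lemma Pr_fin_num E : Pr mu E \is a fin_num.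
Proof.
rewrite ge0_fin_numE ?Pr_ge0 //; apply: (le_lt_trans (le_Pr (@subsetT _ E))).
by rewrite Pr_setT ltry.
Qed.

Lemma PrE E : Pr mu E = (fine (Pr mu E))%:E.
Proof. by rewrite fineK // Pr_fin_num. Qed.

Lemma fine_Pr_ge0 E : (0 <= fine (Pr mu E))%R.
Proof. by rewrite -lee_fin -PrE Pr_ge0. Qed.

Lemma markov_sym (TA TB TC : Type) (A : T -> TA) (B : T -> TB) (C : T -> TC) :
  Defs.markov mu A B C -> Defs.markov mu C B A.
Proof.
move=> ABC c b a.
rewrite (eq_Pr (F := [set t | A t = a /\ B t = b /\ C t = c])); last by move=> t /=; tauto.
by rewrite ABC muleC; congr (_ * _); apply: eq_Pr => t /=; tauto.
Qed.

Lemma markov_mapr (TA TB : Type) (TC : choiceType) (TC' : Type)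
    (A : T -> TA) (B : T -> TB) (C : T -> TC) (h : TC -> TC') :
  Defs.markov mu A B C -> Defs.markov mu A B (h \o C).
Proof.
move=> ABC a b c'.
have fiber (F : set T) : Pr mu (F `&` [set t | h (C t) = c']) =
    \esum_(c in [set c | h c = c']) Pr mu (F `&` [set t | C t = c]).
  by rewrite -Pr_partition.
have PrAB := PrE [set t | A t = a /\ B t = b]; have PrB := PrE [set t | B t = b].
rewrite (eq_Pr (E := [set t | A t = a /\ B t = b /\ _])
               (F := [set t | A t = a /\ B t = b] `&` [set t | h (C t) = c']));
  last by move=> t /=; tauto.
rewrite (eq_Pr (E := [set t | B t = b /\ _])
               (F := [set t | B t = b] `&` [set t | h (C t) = c']));
  last by move=> t /=; tauto.
rewrite !fiber muleC PrB ge0_esum_distrr ?fine_Pr_ge0 //; last by move=> ?; exact: Pr_ge0.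
rewrite PrAB ge0_esum_distrr ?fine_Pr_ge0 //; last by move=> ?; exact: Pr_ge0.
apply: eq_esum => c _; rewrite -PrB -PrAB muleC.
rewrite (eq_Pr (F := [set t | A t = a /\ B t = b /\ C t = c])); last by move=> t /=; tauto.
by rewrite ABC; congr (_ * _); apply: eq_Pr => t /=; tauto.
Qed.

Lemma markov_mapl (TA : choiceType) (TB TC : Type) (TA' : Type)
    (A : T -> TA) (B : T -> TB) (C : T -> TC) (g : TA -> TA') :
  Defs.markov mu A B C -> Defs.markov mu (g \o A) B C.
Proof. by move/markov_sym/(markov_mapr g)/markov_sym. Qed.

End Probability.

Section ConditionalOnInputs.
Variables (R : realType) (T : choiceType) (mu : T -> \bar R) (V : finType).
Variables (p : V -> V -> R) (X Y : T -> V).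
Hypothesis mu_ge0 : forall t, 0 <= mu t.
Hypothesis PrXY : forall x y, Pr mu [set t | X t = x /\ Y t = y] = (p x y)%:E.
Hypothesis p_gt0 : forall x y, (0 < p x y)%R.
Hypothesis p_sum1 : (\sum_x \sum_y p x y = 1)%R.

Lemma Pr_setT_of_inputs : Pr mu setT = 1.
Proof.
rewrite (Pr_fin_partition mu_ge0 (fun t => (X t, Y t))).
transitivity (\sum_(u : V * V) (p u.1 u.2)%:E); last first.
  by rewrite sumEFin -pair_bigA /= p_sum1.
apply: eq_bigr => -[x y] _; rewrite -PrXY; apply: eq_Pr => // t /=.
by split; [case=> _ [-> ->] | case=> -> ->].
Qed.

Let Pr_ge0 := Pr_ge0 mu_ge0.
Let le_Pr := le_Pr mu_ge0.
Let eq_Pr := eq_Pr mu_ge0.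
Let PrE := PrE mu_ge0 Pr_setT_of_inputs.
Let fine_Pr_ge0 := fine_Pr_ge0 mu_ge0 Pr_setT_of_inputs.

Lemma fine_Pr_gt0_inputs (F : set T) x y :
  (forall t, 0 < mu t -> X t = x -> Y t = y -> F t) -> (0 < fine (Pr mu F))%R.
Proof.
move=> XY_F; rewrite -lte_fin -PrE (@lt_le_trans _ _ (p x y)%:E) ?lte_fin //.
rewrite -PrXY (eq_Pr_ae mu_ge0 (F := [set t | X t = x /\ Y t = y] `&` F)).
  by apply: le_Pr => t [].
by move=> t mut; split=> [[Xt Yt]|[]//]; split=> //; exact: XY_F.
Qed.

Definition cPr (W : Type) (A : T -> W) w x y :=
  (fine (Pr mu [set t | A t = w /\ X t = x /\ Y t = y]) / p x y)%R.

Lemma Pr_cPr (W : Type) (A : T -> W) w x y :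
  Pr mu [set t | A t = w /\ X t = x /\ Y t = y] = (cPr A w x y * p x y)%:E.
Proof. by rewrite /cPr divfK ?gt_eqF // -PrE. Qed.

Lemma EFin_cPr (W : Type) (A : T -> W) w x y :
  (cPr A w x y)%:E = ((p x y)^-1)%:E * Pr mu [set t | A t = w /\ X t = x /\ Y t = y].
Proof. by rewrite PrE -EFinM mulrC. Qed.

Lemma cPr_ge0 (W : Type) (A : T -> W) w x y : (0 <= cPr A w x y)%R.
Proof. by rewrite divr_ge0 ?fine_Pr_ge0 ?(ltW (p_gt0 x y)). Qed.

Lemma cPr_gt0P (W : Type) (A : T -> W) w x y : (0 < cPr A w x y)%R ->
  exists t, [/\ 0 < mu t, A t = w, X t = x & Y t = y].
Proof.
rewrite -lte_fin EFin_cPr pmule_rgt0 ?lte_fin ?invr_gt0 //.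
by move=> /(Pr_gt0P mu_ge0)[t [[At [Xt Yt]] mut]]; exists t.
Qed.

Lemma esum_cPr_pair (W W' : choiceType) (A : T -> W) (B : T -> W') w x y :
  \esum_(b in [set: W']) (cPr (fun t => (A t, B t)) (w, b) x y)%:E = (cPr A w x y)%:E.
Proof.
under eq_esum do rewrite EFin_cPr.
rewrite -ge0_esum_distrr ?invr_ge0 ?(ltW (p_gt0 x y)) //.
rewrite EFin_cPr (Pr_partitionT mu_ge0 B); congr (_ * _); apply: eq_esum => b _.
by apply: eq_Pr => t /=; split=> [[[-> ->] [-> ->]]|[[-> [-> ->]] ->]].
Qed.

Lemma esum_cPr (W : choiceType) (A : T -> W) x y :
  \esum_(w in [set: W]) (cPr A w x y)%:E = 1.
Proof.
under eq_esum do rewrite EFin_cPr.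
rewrite -ge0_esum_distrr ?invr_ge0 ?(ltW (p_gt0 x y)) //.
rewrite (eq_esum (b := fun w => Pr mu ([set t | X t = x /\ Y t = y] `&` [set t | A t = w])));
  last by move=> w _; apply: eq_Pr => t /=; tauto.
by rewrite -Pr_partitionT // PrXY -EFinM mulVf // gt_eqF.
Qed.

Lemma cPr_pair_le (W W' : Type) (A : T -> W) (B : T -> W') w b x y :
  (cPr (fun t => (A t, B t)) (w, b) x y <= cPr B b x y)%R.
Proof.
rewrite -lee_fin !EFin_cPr lee_wpmul2l ?lee_fin ?invr_ge0 ?(ltW (p_gt0 x y)) //.
by apply: le_Pr => // t /= [[_ ->] [-> ->]].
Qed.

Lemma cPr_markov_inputs (W : Type) (A : T -> W) w x y y' :
  Defs.markov mu A X Y -> cPr A w x y = cPr A w x y'.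
Proof.
move=> AXY.
have cPrE y0 : cPr A w x y0 =
    (fine (Pr mu [set t | A t = w /\ X t = x]) / fine (Pr mu [set t | X t = x]))%R.
  have PrX_gt0 : (0 < fine (Pr mu [set t | X t = x]))%R.
    by apply: (@fine_Pr_gt0_inputs _ x y0) => t _ Xt.
  apply/eqP; rewrite /cPr eqr_div ?(gt_eqF PrX_gt0) ?(gt_eqF (p_gt0 x y0)) //.
  by apply/eqP/EFin_inj; rewrite !EFinM -!PrE -PrXY AXY.
by rewrite !cPrE.
Qed.

Lemma cPr_markov_inputsC (W : Type) (A : T -> W) w x x' y :
  Defs.markov mu A Y X -> cPr A w x y = cPr A w x' y.
Proof.
move=> AYX.
have cPrE x0 : cPr A w x0 y =
    (fine (Pr mu [set t | A t = w /\ Y t = y]) / fine (Pr mu [set t | Y t = y]))%R.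
  have PrY_gt0 : (0 < fine (Pr mu [set t | Y t = y]))%R.
    by apply: (@fine_Pr_gt0_inputs _ x0 y) => t _ _ Yt.
  apply/eqP; rewrite /cPr eqr_div ?(gt_eqF PrY_gt0) ?(gt_eqF (p_gt0 x0 y)) //.
  apply/eqP/EFin_inj; rewrite !EFinM -!PrE -PrXY.
  rewrite (eq_Pr (E := [set t | X t = x0 /\ _]) (F := [set t | Y t = y /\ X t = x0]));
    last by move=> t /=; tauto.
  rewrite -AYX; congr (_ * _); apply: eq_Pr => t /=; tauto.
by rewrite !cPrE.
Qed.

Lemma Pr_le_of_cPr_le (W : Type) (A : T -> W) w c :
  (forall x y, cPr A w x y <= c)%R -> Pr mu [set t | A t = w] <= c%:E.
Proof.
move=> cPr_le; rewrite (Pr_fin_partition mu_ge0 (fun t => (X t, Y t))).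
apply: (@le_trans _ _ (\sum_(u : V * V) (c * p u.1 u.2)%:E)); last first.
  by rewrite sumEFin -mulr_sumr -pair_bigA /= p_sum1 mulr1.
apply: lee_sum => -[x y] _.
rewrite (eq_Pr (F := [set t | A t = w /\ X t = x /\ Y t = y])); last first.
  by move=> t /=; split=> [[-> [-> ->]]|[-> [-> ->]]].
by rewrite Pr_cPr lee_fin ler_wpM2r // ltW.
Qed.

(* The [#|V|] input pairs [(xs i, ys i)] give [A = w] the same probability and [(A, B)] tells them
   apart, so they cut [#|V|] disjoint pieces of that mass out of the common law of [B]. *)
Lemma cPr_le_inv_card (W W' : choiceType) (A : T -> W) (B : T -> W')
    (xs ys : V -> V) w i0 :
  (forall i, cPr A w (xs i) (ys i) = cPr A w (xs i0) (ys i0)) ->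
  (forall i b, cPr B b (xs i) (ys i) = cPr B b (xs i0) (ys i0)) ->
  (forall i j t t', 0 < mu t -> 0 < mu t' -> A t = A t' -> B t = B t' ->
     X t = xs i -> Y t = ys i -> X t' = xs j -> Y t' = ys j -> i = j) ->
  (cPr A w (xs i0) (ys i0) <= (#|V|%:R)^-1)%R.
Proof.
move=> A_const B_const AB_inj.
pose u i b := (cPr (fun t => (A t, B t)) (w, b) (xs i) (ys i))%:E.
have : \sum_(i : V) \esum_(b in [set: W']) u i b <=
       \esum_(b in [set: W']) (cPr B b (xs i0) (ys i0))%:E.
  apply: sum_esum_disjoint_le => [i b|i b|b|i j b].
  - by rewrite lee_fin cPr_ge0.
  - by rewrite lee_fin -(B_const i) cPr_pair_le.
  - by rewrite lee_fin cPr_ge0.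
  rewrite /u !lte_fin => ui_gt0 uj_gt0.
  have [t [mut ABt Xt Yt]] := cPr_gt0P ui_gt0.
  have [t' [mut' ABt' Xt' Yt']] := cPr_gt0P uj_gt0.
  case: ABt ABt' => At Bt [At' Bt'].
  by apply: (AB_inj i j t t'); rewrite ?At ?At' ?Bt ?Bt'.
rewrite esum_cPr; under eq_bigr do rewrite esum_cPr_pair A_const.
rewrite sumEFin sumr_const lee_fin => card_le.
have card_gt0 : (0 < #|V|%:R :> R)%R by rewrite ltr0n; apply/card_gt0P; exists i0.
by rewrite -(ler_pM2l card_gt0) mulfV ?gt_eqF // mulr_natl.
Qed.

Section Messages.
Variables (f : V -> V -> V) (Z : T -> V).
Variables (W12 W23 W31 : choiceType) (M12 : T -> W12) (M23 : T -> W23) (M31 : T -> W31).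
Hypothesis f_injr : forall x, injective (f x).
Hypothesis f_injl : forall y, injective (f^~ y).
Hypothesis Z_f : forall t, 0 < mu t -> Z t = f (X t) (Y t).
Hypothesis Z_of_M23_M31 : forall t t', 0 < mu t -> 0 < mu t' ->
  M23 t = M23 t' -> M31 t = M31 t' -> Z t = Z t'.
Hypothesis XY_of_messages : forall t t', 0 < mu t -> 0 < mu t' ->
  M12 t = M12 t' -> M23 t = M23 t' -> M31 t = M31 t' -> X t = X t' /\ Y t = Y t'.
Hypothesis private_A : Defs.markov mu (fun t => (M12 t, M31 t)) X (fun t => (Y t, Z t)).
Hypothesis private_B : Defs.markov mu (fun t => (M12 t, M23 t)) Y (fun t => (X t, Z t)).
Hypothesis private_C : Defs.markov mu (fun t => (M23 t, M31 t)) Z (fun t => (X t, Y t)).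

Lemma cPr_markov_output (W : Type) (A : T -> W) w x y x' y' :
  Defs.markov mu A Z (fun t => (X t, Y t)) -> f x y = f x' y' ->
  cPr A w x y = cPr A w x' y'.
Proof.
move=> AZXY fxy.
have cPrE x0 y0 : f x0 y0 = f x y -> cPr A w x0 y0 =
    (fine (Pr mu [set t | A t = w /\ Z t = f x y]) / fine (Pr mu [set t | Z t = f x y]))%R.
  move=> fxy0.
  have PrZ_gt0 : (0 < fine (Pr mu [set t | Z t = f x y]))%R.
    by apply: (@fine_Pr_gt0_inputs _ x0 y0) => t /Z_f Zt Xt Yt /=; rewrite Zt Xt Yt.
  have PrZXY : Pr mu [set t | Z t = f x y /\ (X t, Y t) = (x0, y0)] = (p x0 y0)%:E.
    rewrite -PrXY; apply: eq_Pr_ae => // t /= /Z_f ->.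
    by split=> [[_ [-> ->]]|[-> ->]].
  apply/eqP; rewrite /cPr eqr_div ?(gt_eqF PrZ_gt0) ?(gt_eqF (p_gt0 x0 y0)) //.
  apply/eqP/EFin_inj; rewrite !EFinM -!PrE -PrZXY -AZXY; congr (_ * _).
  apply: eq_Pr_ae => // t /= /Z_f ->.
  by split=> [[-> [-> ->]]|[-> [_ [-> ->]]]].
by rewrite !cPrE // fxy.
Qed.

Let markov_M12_X : Defs.markov mu M12 X Y :=
  markov_mapr mu_ge0 Pr_setT_of_inputs fst (markov_mapl mu_ge0 Pr_setT_of_inputs fst private_A).
Let markov_M31_X : Defs.markov mu M31 X Y :=
  markov_mapr mu_ge0 Pr_setT_of_inputs fst (markov_mapl mu_ge0 Pr_setT_of_inputs snd private_A).
Let markov_M12_Y : Defs.markov mu M12 Y X :=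
  markov_mapr mu_ge0 Pr_setT_of_inputs fst (markov_mapl mu_ge0 Pr_setT_of_inputs fst private_B).
Let markov_M23_Y : Defs.markov mu M23 Y X :=
  markov_mapr mu_ge0 Pr_setT_of_inputs fst (markov_mapl mu_ge0 Pr_setT_of_inputs snd private_B).
Let markov_M23_Z : Defs.markov mu M23 Z (fun t => (X t, Y t)) :=
  markov_mapl mu_ge0 Pr_setT_of_inputs fst private_C.
Let markov_M31_Z : Defs.markov mu M31 Z (fun t => (X t, Y t)) :=
  markov_mapl mu_ge0 Pr_setT_of_inputs snd private_C.

Lemma cPr_M12_const w x y x' y' : cPr M12 w x y = cPr M12 w x' y'.
Proof.
by rewrite (cPr_markov_inputs w x y y' markov_M12_X) (cPr_markov_inputsC w x x' y' markov_M12_Y).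
Qed.

Lemma cPr_M31_const w x y x' y' : cPr M31 w x y = cPr M31 w x' y'.
Proof.
rewrite (cPr_markov_inputs w x y (invF (@f_injr x) (f x' y')) markov_M31_X).
by apply: cPr_markov_output markov_M31_Z _; rewrite f_invF.
Qed.

Lemma cPr_M23_const w x y x' y' : cPr M23 w x y = cPr M23 w x' y'.
Proof.
rewrite (cPr_markov_inputsC w x (invF (@f_injl y) (f x' y')) y markov_M23_Y).
by apply: cPr_markov_output markov_M23_Z _; rewrite (f_invF (@f_injl y)).
Qed.

Lemma cPr_M31_le w x y : (cPr M31 w x y <= (#|V|%:R)^-1)%R.
Proof.
apply: (cPr_le_inv_card (B := M23) (xs := id) (ys := fun=> y) (i0 := x))
  => [i|i b|i j t t' mut mut' e31 e23 Xt Yt Xt' Yt'].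
- exact: cPr_M31_const.
- exact: cPr_M23_const.
have := Z_of_M23_M31 mut mut' e23 e31; rewrite !Z_f // Xt Yt Xt' Yt'; exact: f_injl.
Qed.

Lemma cPr_M23_le w x y : (cPr M23 w x y <= (#|V|%:R)^-1)%R.
Proof.
apply: (cPr_le_inv_card (B := M31) (xs := fun=> x) (ys := id) (i0 := y))
  => [i|i b|i j t t' mut mut' e23 e31 Xt Yt Xt' Yt'].
- exact: cPr_M23_const.
- exact: cPr_M31_const.
have := Z_of_M23_M31 mut mut' e23 e31; rewrite !Z_f // Xt Yt Xt' Yt'; exact: f_injr.
Qed.

Lemma cPr_M12_le w x y : (cPr M12 w x y <= (#|V|%:R)^-1)%R.
Proof.
pose ys i := invF (@f_injr i) (f x y).
rewrite (cPr_M12_const w x y x (ys x)).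
apply: (cPr_le_inv_card (B := fun t => (M23 t, M31 t)) (xs := id) (ys := ys) (i0 := x))
  => [i|i b|i j t t' mut mut' e12 [e23 e31] Xt _ Xt' _].
- exact: cPr_M12_const.
- by apply: cPr_markov_output private_C _; rewrite !f_invF.
by rewrite -Xt -Xt'; case: (XY_of_messages mut mut' e12 e23 e31).
Qed.

Lemma Pr_messages_le :
  [/\ forall w, Pr mu [set t | M12 t = w] <= ((#|V|%:R)^-1)%:E,
      forall w, Pr mu [set t | M23 t = w] <= ((#|V|%:R)^-1)%:E,
      forall w, Pr mu [set t | M31 t = w] <= ((#|V|%:R)^-1)%:E &
      forall w x y, Pr mu [set t | M31 t = w /\ X t = x /\ Y t = y] <=
                    ((#|V|%:R)^-1 * p x y)%:E].
Proof.
split=> [w|w|w|w x y].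
- exact: Pr_le_of_cPr_le (cPr_M12_le w).
- exact: Pr_le_of_cPr_le (cPr_M23_le w).
- exact: Pr_le_of_cPr_le (cPr_M31_le w).
by rewrite Pr_cPr lee_fin ler_wpM2r ?cPr_M31_le // ltW.
Qed.

End Messages.

End ConditionalOnInputs.

Lemma log2_ge0 (R : realType) (N : R) : (1 <= N)%R -> (0 <= log2 N)%R.
Proof. by move=> N_ge1; rewrite /log2 divr_ge0 ?ln_ge0 ?ler1n. Qed.

Lemma log2_le_oppr (R : realType) (N r : R) :
  (0 < N)%R -> (0 < r)%R -> (r <= N^-1)%R -> (log2 N <= - log2 r)%R.
Proof.
move=> N_gt0 r_gt0 r_le; rewrite /log2 -mulNr ler_wpM2r ?invr_ge0 ?ln_ge0 ?ler1n //.
rewrite -subr_le0 opprK -lnM ?posrE // ln_le0 //.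
by rewrite -(mulfV (lt0r_neq0 N_gt0)) ler_wpM2l // ltW.
Qed.

Section EntropyBounds.
Variables (R : realType) (T : choiceType) (mu : T -> \bar R) (N : R).
Hypothesis mu_ge0 : forall t, 0 <= mu t.
Hypothesis Pr_setT : Pr mu setT = 1.
Hypothesis N_ge1 : (1 <= N)%R.

Let N_gt0 : (0 < N)%R := lt_le_trans ltr01 N_ge1.

Lemma entropy_ge_log2 (TA : choiceType) (A : T -> TA) :
  (forall a, Pr mu [set t | A t = a] <= (N^-1)%:E) -> (log2 N)%:E <= entropy mu A.
Proof.
move=> PrA_le.
apply: (@le_trans _ _ (\esum_(a in [set: TA]) (log2 N)%:E * Pr mu [set t | A t = a])).
  rewrite -ge0_esum_distrr ?log2_ge0 //; last by move=> a; exact: Pr_ge0.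
  rewrite (eq_esum (b := fun a => Pr mu (setT `&` [set t | A t = a]))); last first.
    by move=> a _; apply: eq_Pr => // t; split=> [|[]].
  by rewrite -Pr_partitionT // Pr_setT mule1.
apply: le_esum => a _ /=; set q := fine (Pr mu [set t | A t = a]).
rewrite (PrE mu_ge0 Pr_setT [set t | A t = a]) -/q -EFinM lee_fin.
have q_ge0 : (0 <= q)%R := fine_Pr_ge0 mu_ge0 Pr_setT _.
case: ifPn => [/eqP ->|q_neq0]; first by rewrite mulr0.
have q_gt0 : (0 < q)%R by rewrite lt_neqAle eq_sym q_neq0.
rewrite mulrC mulNr -mulrN ler_wpM2l // log2_le_oppr //.
by rewrite -lee_fin /q -PrE.
Qed.

Lemma cond_entropy_ge_log2 (TA TB : choiceType) (A : T -> TA) (B : T -> TB) :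
  (forall a b, Pr mu [set t | A t = a /\ B t = b] <= (N^-1)%:E * Pr mu [set t | B t = b]) ->
  (log2 N)%:E <= cond_entropy mu A B.
Proof.
move=> PrAB_le; apply: (@le_trans _ _ (\esum_(ab in [set: TA * TB]) (log2 N)%:E *
     Pr mu [set t | A t = ab.1 /\ B t = ab.2])).
  rewrite -ge0_esum_distrr ?log2_ge0 //; last by move=> a; exact: Pr_ge0.
  rewrite (eq_esum (b := fun ab => Pr mu (setT `&` [set t | (A t, B t) = ab]))); last first.
    move=> [a b] _; apply: eq_Pr => // t /=.
    by split=> [[-> ->]|[_ [-> ->]]].
  by rewrite -Pr_partitionT // Pr_setT mule1.
apply: le_esum => -[a b] _ /=; set q := fine (Pr mu [set t | A t = a /\ B t = b]).
set qb := fine (Pr mu [set t | B t = b]).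
rewrite (PrE mu_ge0 Pr_setT [set t | A t = a /\ B t = b]) -/q -EFinM lee_fin.
have q_ge0 : (0 <= q)%R := fine_Pr_ge0 mu_ge0 Pr_setT _.
case: ifPn => [/eqP ->|q_neq0]; first by rewrite mulr0.
have q_gt0 : (0 < q)%R by rewrite lt_neqAle eq_sym q_neq0.
have q_le : (q <= N^-1 * qb)%R by rewrite -lee_fin /q /qb EFinM -!(PrE mu_ge0 Pr_setT).
have qb_gt0 : (0 < qb)%R.
  by rewrite -(@pmulr_rgt0 _ N^-1) ?invr_gt0 // (lt_le_trans q_gt0 q_le).
rewrite mulrC mulNr -mulrN ler_wpM2l // log2_le_oppr ?divr_gt0 //.
by rewrite ler_pdivrMr // mulrC.
Qed.

End EntropyBounds.

Lemma prefix_free_cat_inj (C : set word) (u u' s s' : word) :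
  prefix_free C -> C u -> C u' -> u ++ s = u' ++ s' -> u = u' /\ s = s'.
Proof.
move=> C_pf Cu Cu' e.
suff uu' : u = u'.
  by split=> //; move: e; rewrite uu' => /(congr1 (drop (size u'))); rewrite !drop_size_cat.
wlog le_uu' : u u' s s' Cu Cu' e / (size u <= size u')%N.
  move=> wlog_le; have [le_uu'|/ltnW le_u'u] := leqP (size u) (size u').
    exact: (wlog_le u u' s s').
  by apply/esym/(wlog_le u' u s' s).
apply: C_pf => //; rewrite prefixE; apply/eqP.
by move/(congr1 (take (size u))): e; rewrite take_size_cat // takel_cat.
Qed.

Definition link_transcript (s : lhist) : word := flatten [seq m.1 ++ m.2 | m <- s].

Lemma tr_of_link_transcript (l : round -> word * word) h :
  tr_of l h = link_transcript (map l h).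
Proof. by rewrite /tr_of /link_transcript -map_comp. Qed.

Section LinkParsing.
Variables (C1 C2 : lhist -> set word).
Hypothesis C1_pf : forall h, prefix_free (C1 h).
Hypothesis C2_pf : forall h, prefix_free (C2 h).

Definition link_wf (g s : lhist) := forall k, (k < size s)%N ->
  C1 (g ++ take k s) (nth ([::], [::]) s k).1 /\ C2 (g ++ take k s) (nth ([::], [::]) s k).2.

Lemma link_wf_prefix s g s' : link_wf g s -> link_wf g s' ->
  link_transcript s = link_transcript s' -> (size s <= size s')%N -> s = take (size s) s'.
Proof.
elim: s g s' => [|m s IH] g [|m' s'] //= wf wf' e le.
have [C1m C2m] := wf 0%N isT; have [C1m' C2m'] := wf' 0%N isT.
rewrite /= ?take0 !cats0 in C1m C2m C1m' C2m'.
move: e; rewrite /link_transcript /= -!catA => e.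
have [e1 e2] := prefix_free_cat_inj (@C1_pf g) C1m C1m' e.
have [e3 e4] := prefix_free_cat_inj (@C2_pf g) C2m C2m' e2.
have mm' : m = m'.
  by case: m m' e1 e3 {wf wf' C1m C2m C1m' C2m' e e2 e4} => ? ? [? ?] /= -> ->.
rewrite -mm'; congr cons; apply: (IH (rcons g m)) => // k k_lt.
- by have := wf k.+1 k_lt; rewrite /= -cats1 -catA.
- by have := wf' k.+1 k_lt; rewrite /= -cats1 -catA mm'.
Qed.

End LinkParsing.

Lemma rounds_links_inj (a b : seq round) :
  map l12 a = map l12 b -> map l23 a = map l23 b -> map l31 a = map l31 b -> a = b.
Proof.
elim: a b => [|r a IH] [|r' b] //= [r12 e12] [r23 e23] [r31 e31].
rewrite (IH b e12 e23 e31); congr cons.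
by case: r r' r12 r23 r31 => [[? ?] ?] [[? ?] ?]; rewrite /l12 /l23 /l31 /= => -> -> ->.
Qed.

Lemma prodr_gt0P (R : numDomainType) (m : nat) (F : 'I_m -> R) : (forall k, 0 <= F k)%R ->
  (0 < \prod_(k < m) F k)%R <-> (forall k, 0 < F k)%R.
Proof.
move=> F_ge0; split=> [prod_gt0 k|F_gt0]; last exact: prodr_gt0.
rewrite lt_neqAle F_ge0 andbT; apply/negP => /eqP Fk0.
by move: prod_gt0; rewrite (bigD1 k) //= -Fk0 mul0r ltxx.
Qed.

Lemma mulr3_gt0P (R : numDomainType) (a b c : R) : (0 <= a)%R -> (0 <= b)%R -> (0 <= c)%R ->
  (0 < a * b * c)%R <-> [/\ 0 < a, 0 < b & 0 < c]%R.
Proof.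
move=> a_ge0 b_ge0 c_ge0; split=> [abc_gt0|[? ? ?]]; last by rewrite !mulr_gt0.
have := gt_eqF abc_gt0; rewrite !mulf_eq0 => /norP[/norP[a_neq0 b_neq0] c_neq0].
by split; rewrite lt_neqAle eq_sym ?a_neq0 ?b_neq0 ?c_neq0.
Qed.

Section ValidProtocol.
Variables (TX TY TZ : finType) (R : realType) (P : protocol TX TY TZ R).
Hypothesis P_valid : valid_protocol P.

Lemma codeAB_prefix_free h : prefix_free (codeAB P h). Proof. by case: P_valid. Qed.
Lemma codeBA_prefix_free h : prefix_free (codeBA P h). Proof. by case: P_valid => _ []. Qed.
Lemma codeBC_prefix_free h : prefix_free (codeBC P h). Proof. by case: P_valid => _ [_ []]. Qed.
Lemma codeCB_prefix_free h : prefix_free (codeCB P h).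
Proof. by case: P_valid => _ [_ [_ []]]. Qed.
Lemma codeCA_prefix_free h : prefix_free (codeCA P h).
Proof. by case: P_valid => _ [_ [_ [_ []]]]. Qed.
Lemma codeAC_prefix_free h : prefix_free (codeAC P h).
Proof. by case: P_valid => _ [_ [_ [_ [_ []]]]]. Qed.

Lemma alice_kernel x h12 h31 : (forall m, 0 <= alice P x h12 h31 m)%R /\
  (forall u v, 0 < alice P x h12 h31 (u, v) -> codeAB P h12 u /\ codeAC P h31 v)%R.
Proof. by case: P_valid => _ [_ [_ [_ [_ [_ [H _]]]]]]; have [? [_ ?]] := H x h12 h31. Qed.

Lemma bob_kernel y h12 h23 : (forall m, 0 <= bob P y h12 h23 m)%R /\
  (forall u v, 0 < bob P y h12 h23 (u, v) -> codeBC P h23 u /\ codeBA P h12 v)%R.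
Proof. by case: P_valid => _ [_ [_ [_ [_ [_ [_ [H _]]]]]]]; have [? [_ ?]] := H y h12 h23. Qed.

Lemma charlie_kernel h23 h31 : (forall m, 0 <= charlie P h23 h31 m)%R /\
  (forall u v, 0 < charlie P h23 h31 (u, v) -> codeCA P h31 u /\ codeCB P h23 v)%R.
Proof. by case: P_valid => _ [_ [_ [_ [_ [_ [_ [_ [H _]]]]]]]]; have [? [_ ?]] := H h23 h31. Qed.

Lemma out_kernel m23 m31 :
  (forall z, 0 <= out P m23 m31 z)%R /\ (\sum_(z : TZ) out P m23 m31 z = 1)%R.
Proof. by case: P_valid => _ [_ [_ [_ [_ [_ [_ [_ [_ H]]]]]]]]. Qed.

Lemma step_ge0 x y h r : (0 <= step P x y h r)%R.
Proof.
by rewrite !mulr_ge0 ?(alice_kernel _ _ _).1 ?(bob_kernel _ _ _).1 ?(charlie_kernel _ _).1.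
Qed.

Lemma hprob_ge0 x y h : (0 <= hprob P x y h)%R.
Proof. by apply: prodr_ge0 => k _; exact: step_ge0. Qed.

Lemma hprob_gt0P x y h : (0 < hprob P x y h)%R <->
  (forall k, (k < size h)%N -> [/\
    0 < alice P x (map l12 (take k h)) (map l31 (take k h))
          ((l12 (nth eps_round h k)).1, (l31 (nth eps_round h k)).2),
    0 < bob P y (map l12 (take k h)) (map l23 (take k h))
          ((l23 (nth eps_round h k)).1, (l12 (nth eps_round h k)).2) &
    0 < charlie P (map l23 (take k h)) (map l31 (take k h))
          ((l31 (nth eps_round h k)).1, (l23 (nth eps_round h k)).2)]%R).
Proof.
have step_gt0P k :=
  mulr3_gt0P ((alice_kernel x (map l12 (take k h)) (map l31 (take k h))).1 _)
             ((bob_kernel y (map l12 (take k h)) (map l23 (take k h))).1 _)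
             ((charlie_kernel (map l23 (take k h)) (map l31 (take k h))).1 _).
rewrite /hprob prodr_gt0P; last by move=> k; exact: step_ge0.
split=> [steps_gt0 k k_lt|kernels_gt0 k]; first exact/step_gt0P/(steps_gt0 (Ordinal k_lt)).
exact/step_gt0P/kernels_gt0.
Qed.

(* Alice's and Bob's messages depend only on their own input, so a run possible on inputs [(x, y)]
   and on [(x', y')] is also possible on [(x, y')]. *)
Lemma hprob_rectangle x y x' y' h : (0 < hprob P x y h)%R -> (0 < hprob P x' y' h)%R ->
  (0 < hprob P x y' h)%R.
Proof.
move=> /hprob_gt0P xy_gt0 /hprob_gt0P x'y'_gt0; apply/hprob_gt0P => k k_lt.
by have [? _ ?] := xy_gt0 k k_lt; have [_ ? _] := x'y'_gt0 k k_lt.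
Qed.

Lemma hprob_gt0_link_wf x y h : (0 < hprob P x y h)%R ->
  [/\ link_wf (codeAB P) (codeBA P) [::] (map l12 h),
      link_wf (codeBC P) (codeCB P) [::] (map l23 h) &
      link_wf (codeCA P) (codeAC P) [::] (map l31 h)].
Proof.
move=> /hprob_gt0P h_gt0; split=> k; rewrite size_map => k_lt;
  rewrite /= -map_take (nth_map eps_round) //; have [a_gt0 b_gt0 c_gt0] := h_gt0 k k_lt.
- by have [? _] := (alice_kernel _ _ _).2 _ _ a_gt0; have [_ ?] := (bob_kernel _ _ _).2 _ _ b_gt0.
- by have [? _] := (bob_kernel _ _ _).2 _ _ b_gt0; have [_ ?] := (charlie_kernel _ _).2 _ _ c_gt0.
- by have [? _] := (charlie_kernel _ _).2 _ _ c_gt0; have [_ ?] := (alice_kernel _ _ _).2 _ _ a_gt0.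
Qed.

Lemma hprob_gt0_prefix x y x' y' h h' : (0 < hprob P x y h)%R -> (0 < hprob P x' y' h')%R ->
  tr_of l12 h = tr_of l12 h' -> tr_of l23 h = tr_of l23 h' -> tr_of l31 h = tr_of l31 h' ->
  (size h <= size h')%N -> h = take (size h) h'.
Proof.
move=> /hprob_gt0_link_wf[wf12 wf23 wf31] /hprob_gt0_link_wf[wf12' wf23' wf31'].
rewrite !tr_of_link_transcript => e12 e23 e31 le; apply: rounds_links_inj; rewrite map_take.
- rewrite -(size_map l12 h).
  by apply: (link_wf_prefix codeAB_prefix_free codeBA_prefix_free wf12 wf12'); rewrite ?size_map.
- rewrite -(size_map l23 h).
  by apply: (link_wf_prefix codeBC_prefix_free codeCB_prefix_free wf23 wf23'); rewrite ?size_map.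
- rewrite -(size_map l31 h).
  by apply: (link_wf_prefix codeCA_prefix_free codeAC_prefix_free wf31 wf31'); rewrite ?size_map.
Qed.

(* Prefix-free codes let the transcripts be parsed back into rounds; a complete run cannot be a
   proper prefix of another one, since it is already quiescent. *)
Lemma complete_run_transcripts_inj x y x' y' h h' :
  (0 < hprob P x y h)%R -> (0 < hprob P x' y' h')%R ->
  complete_run P h -> complete_run P h' ->
  tr_of l12 h = tr_of l12 h' -> tr_of l23 h = tr_of l23 h' -> tr_of l31 h = tr_of l31 h' ->
  h = h'.
Proof.
move=> h_gt0 h'_gt0 [h_quiet h_early] [h'_quiet h'_early] e12 e23 e31.
have [le|lt] := leqP (size h) (size h').
  have hh' := hprob_gt0_prefix h_gt0 h'_gt0 e12 e23 e31 le.
  move: le; rewrite leq_eqVlt => /orP[/eqP eq_size|lt]; first by rewrite hh' eq_size take_size.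
  by case: (h'_early _ lt); rewrite -hh'.
have h'h := hprob_gt0_prefix h'_gt0 h_gt0 (esym e12) (esym e23) (esym e31) (ltnW lt).
by case: (h_early _ lt); rewrite -h'h.
Qed.

End ValidProtocol.

Section CorrectProtocol.
Variables (TX TY TZ : finType) (R : realType) (P : protocol TX TY TZ R) (f : TX -> TY -> TZ).
Hypothesis P_valid : valid_protocol P.
Hypothesis P_correct : correct f P.

Definition runs_with (m12 m23 m31 : word) := [set h | complete_run P h /\
  tr_of l12 h = m12 /\ tr_of l23 h = m23 /\ tr_of l31 h = m31].

Lemma cond_lawE x y m12 m23 m31 z : cond_law P x y m12 m23 m31 z =
  Pr (fun h => (hprob P x y h * out P m23 m31 z)%:E) (runs_with m12 m23 m31).
Proof. by []. Qed.

Lemma run_weight_ge0 x y m23 m31 z h : 0 <= (hprob P x y h * out P m23 m31 z)%:E.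
Proof. by rewrite lee_fin mulr_ge0 ?hprob_ge0 ?(out_kernel P_valid _ _).1. Qed.

Lemma cond_law_ge0 x y m12 m23 m31 z : 0 <= cond_law P x y m12 m23 m31 z.
Proof. by rewrite cond_lawE Pr_ge0 // => h; exact: run_weight_ge0. Qed.

Lemma cond_law_gt0P x y m12 m23 m31 z : 0 < cond_law P x y m12 m23 m31 z ->
  exists h, [/\ runs_with m12 m23 m31 h, (0 < hprob P x y h)%R & (0 < out P m23 m31 z)%R].
Proof.
rewrite cond_lawE => /(Pr_gt0P (@run_weight_ge0 x y m23 m31 z))[h [h_runs]].
rewrite lte_fin => weight_gt0; exists h; split=> //.
- rewrite lt_neqAle hprob_ge0 // andbT; apply: contraTneq weight_gt0 => <-.
  by rewrite mul0r ltxx.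
- rewrite lt_neqAle (out_kernel P_valid _ _).1 andbT; apply: contraTneq weight_gt0 => <-.
  by rewrite mulr0 ltxx.
Qed.

Lemma cond_law_gt0 x y m12 m23 m31 z h : runs_with m12 m23 m31 h ->
  (0 < hprob P x y h)%R -> (0 < out P m23 m31 z)%R -> 0 < cond_law P x y m12 m23 m31 z.
Proof.
move=> h_runs h_gt0 out_gt0; rewrite cond_lawE.
apply: (@lt_le_trans _ _ (hprob P x y h * out P m23 m31 z)%:E); first by rewrite lte_fin mulr_gt0.
rewrite -(@esum_set1 _ _ h (fun h => (hprob P x y h * out P m23 m31 z)%:E)) ?run_weight_ge0 //.
by apply: le_Pr => [h'|h' /= ->]; [exact: run_weight_ge0 | exact: h_runs].
Qed.

(* Charlie's output kernel only sees [(m23, m31)], so any output it can draw after them is possible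
   on the first run, where correctness pins it to [f x y]. *)
Lemma cond_law_output_det x y m12 m23 m31 z x' y' m12' z' :
  0 < cond_law P x y m12 m23 m31 z -> 0 < cond_law P x' y' m12' m23 m31 z' -> z = z'.
Proof.
move=> /cond_law_gt0P[h [h_runs h_gt0 out_gt0]] /cond_law_gt0P[_ [_ _ out'_gt0]].
by rewrite (P_correct (cond_law_gt0 h_runs h_gt0 out_gt0))
           (P_correct (cond_law_gt0 h_runs h_gt0 out'_gt0)).
Qed.

Hypothesis f_injr : forall x, injective (f x).
Hypothesis f_injl : forall y, injective (f^~ y).

Lemma cond_law_inputs_det x y m12 m23 m31 z x' y' z' :
  0 < cond_law P x y m12 m23 m31 z -> 0 < cond_law P x' y' m12 m23 m31 z' -> x = x' /\ y = y'.
Proof.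
move=> /cond_law_gt0P[h [h_runs h_gt0 out_gt0]] /cond_law_gt0P[h' [h'_runs h'_gt0 _]].
have hh' : h = h'.
  case: h_runs h'_runs => h_run [e12 [e23 e31]] [h'_run [e12' [e23' e31']]].
  apply: (complete_run_transcripts_inj P_valid h_gt0 h'_gt0) => //; congruence.
rewrite -hh' in h'_gt0.
have fxy := P_correct (cond_law_gt0 h_runs h_gt0 out_gt0).
have fxy' := P_correct (cond_law_gt0 h_runs (hprob_rectangle P_valid h_gt0 h'_gt0) out_gt0).
have fx'y := P_correct (cond_law_gt0 h_runs (hprob_rectangle P_valid h'_gt0 h_gt0) out_gt0).
by split; [apply: (@f_injl y) | apply: (@f_injr x)]; rewrite /= -fxy.
Qed.

End CorrectProtocol.

Lemma esum_cond_law (TX TY TZ : finType) (R : realType) (P : protocol TX TY TZ R) x y :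
  valid_protocol P -> terminates P ->
  \esum_(k in [set: word * word * word * TZ]) cond_law P x y k.1.1.1 k.1.1.2 k.1.2 k.2 = 1.
Proof.
move=> P_valid P_terminates.
transitivity (\esum_(m in [set: word * word * word]) \esum_(z in [set: TZ])
                 cond_law P x y m.1.1 m.1.2 m.2 z).
  rewrite esum_esum; last by move=> *; exact: cond_law_ge0.
  by congr esum; apply/seteqP; split.
transitivity (\esum_(m in [set: word * word * word])
                Pr (fun h => (hprob P x y h)%:E) (runs_with P m.1.1 m.1.2 m.2)).
  apply: eq_esum => -[[m12 m23] m31] _ /=.
  rewrite esum_setT_fin; last by move=> z; exact: cond_law_ge0.
  under eq_bigr do rewrite cond_lawE.
  rewrite /Pr -esum_sum; last by move=> *; exact: run_weight_ge0.
  by apply: eq_esum => h _; rewrite sumEFin -mulr_sumr (out_kernel P_valid _ _).2 mulr1.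
have hprob_ge0 h : 0 <= (hprob P x y h)%:E by rewrite lee_fin hprob_ge0.
rewrite -(P_terminates x y).
rewrite [RHS](Pr_partitionT hprob_ge0 (fun h => (tr_of l12 h, tr_of l23 h, tr_of l31 h))).
apply: eq_esum => -[[m12 m23] m31] _; apply: eq_Pr => // h /=.
by split=> [[? [<- [<- <-]]]|[? [<- <- <-]]].
Qed.

Section SecureProtocol.
Variables (V : finType) (R : realType) (f : V -> V -> V) (p : V -> V -> R).
Variable P : protocol V V V R.
Hypothesis f_injr : forall x, injective (f x).
Hypothesis f_injl : forall y, injective (f^~ y).
Hypothesis p_pmf : is_pmf p.
Hypothesis p_gt0 : forall x y, (0 < p x y)%R.
Hypothesis P_secure : secure p f P.

Let P_valid : valid_protocol P := proj1 P_secure.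
Let P_terminates : terminates P := proj1 (proj2 P_secure).
Let P_correct : correct f P := proj1 (proj2 (proj2 P_secure)).
Let P_private : private p P := proj2 (proj2 (proj2 P_secure)).
Let mu := joint p P.

Lemma joint_ge0 o : 0 <= mu o.
Proof. by rewrite mule_ge0 ?lee_fin ?(proj1 p_pmf) ?(cond_law_ge0 P_valid). Qed.

Lemma joint_gt0 o : 0 < mu o -> 0 < cond_law P (oX o) (oY o) (oM12 o) (oM23 o) (oM31 o) (oZ o).
Proof.
move=> mu_gt0; rewrite lt_neqAle (cond_law_ge0 P_valid) andbT; apply: contraTneq mu_gt0 => e.
by rewrite /mu /joint -e mule0 ltxx.
Qed.

Lemma Pr_joint_inputs x y : Pr mu [set o | oX o = x /\ oY o = y] = (p x y)%:E.
Proof.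
rewrite /Pr (reindex_esum [set: word * word * word * V] _
  (fun k => (x, y, k.1.1.1, k.1.1.2, k.1.2, k.2) : outcome V V V)).
  rewrite /mu /joint /oX /oY /oM12 /oM23 /oM31 /oZ /= -ge0_esum_distrr ?(proj1 p_pmf) //.
    by rewrite esum_cond_law // mule1.
  by move=> k; exact: cond_law_ge0 P_valid _ _ _ _ _ _.
split=> [k _ //|[[[? ?] ?] ?] [[[? ?] ?] ?] _ _ [-> -> -> ->] //|].
move=> [[[[[x' y'] m12] m23] m31] z] [/= <- <-].
by exists (m12, m23, m31, z).
Qed.

Let Pr_setT : Pr mu setT = 1 := Pr_setT_of_inputs joint_ge0 Pr_joint_inputs (proj2 p_pmf).

Lemma joint_Pr_messages_le :
  [/\ forall w, Pr mu [set o | oM12 o = w] <= ((#|V|%:R)^-1)%:E,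
      forall w, Pr mu [set o | oM23 o = w] <= ((#|V|%:R)^-1)%:E,
      forall w, Pr mu [set o | oM31 o = w] <= ((#|V|%:R)^-1)%:E &
      forall w x y, Pr mu [set o | oM31 o = w /\ oX o = x /\ oY o = y] <=
                    ((#|V|%:R)^-1 * p x y)%:E].
Proof.
have [private_A [private_B private_C]] := P_private.
apply: (Pr_messages_le joint_ge0 Pr_joint_inputs p_gt0 (proj2 p_pmf) f_injr f_injl _ _ _
          private_A private_B private_C).
- by move=> o /joint_gt0 /P_correct.
- move=> o o' /joint_gt0 o_gt0 /joint_gt0 o'_gt0 e23 e31.
  rewrite e23 e31 in o_gt0.
  exact: (cond_law_output_det P_valid P_correct o_gt0 o'_gt0).
- move=> o o' /joint_gt0 o_gt0 /joint_gt0 o'_gt0 e12 e23 e31.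
  rewrite e12 e23 e31 in o_gt0.
  exact: (cond_law_inputs_det P_valid P_correct f_injr f_injl o_gt0 o'_gt0).
Qed.

Let card_ge1 : (1 <= #|V|%:R :> R)%R.
Proof.
case: (pickP (fun _ : V => true)) => [x _|V0].
  by rewrite ler1n; apply/card_gt0P; exists x.
by have := proj2 p_pmf; rewrite big_pred0 // => /esym/eqP; rewrite oner_eq0.
Qed.

Lemma secure_entropy_messages_ge :
  (log2 #|V|%:R)%:E <= entropy mu (@oM12 _ _ _) /\
  (log2 #|V|%:R)%:E <= entropy mu (@oM23 _ _ _) /\
  (log2 #|V|%:R)%:E <= entropy mu (@oM31 _ _ _).
Proof.
have [M12_le M23_le M31_le _] := joint_Pr_messages_le.
by split; [|split]; apply: (entropy_ge_log2 joint_ge0 Pr_setT card_ge1).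
Qed.

Lemma secure_views_entropy_ge : (log2 #|V|%:R)%:E <= views_entropy p P.
Proof.
have [_ _ _ M31XY_le] := joint_Pr_messages_le.
apply: (cond_entropy_ge_log2 joint_ge0 Pr_setT card_ge1) => v [x y].
rewrite (eq_Pr joint_ge0 (E := [set o | (oX o, oY o) = (x, y)])
               (F := [set o | oX o = x /\ oY o = y])); last first.
  by move=> o /=; split=> [[-> ->]|[-> ->]].
rewrite Pr_joint_inputs -EFinM; apply: le_trans (M31XY_le v.2.2 x y).
by apply: (le_Pr joint_ge0) => o /= [<- [-> ->]].
Qed.

End SecureProtocol.

Lemma group_add_injr (gT : finGroupType) (n : nat) (x : {ffun 'I_n -> gT}) :
  injective (@group_add gT n x).
Proof. by move=> y y' /ffunP e; apply/ffunP => i; have := e i; rewrite !ffunE => /mulgI. Qed.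

Lemma group_add_injl (gT : finGroupType) (n : nat) (y : {ffun 'I_n -> gT}) :
  injective (@group_add gT n^~ y).
Proof. by move=> x x' /ffunP e; apply/ffunP => i; have := e i; rewrite !ffunE => /mulIg. Qed.

Lemma log2_card_ffun (R : realType) (T : finType) (n : nat) : (0 < #|T|)%N ->
  log2 (#|{ffun 'I_n -> T}|%:R : R) = (n%:R * log2 #|T|%:R)%R.
Proof.
by move=> T_gt0; rewrite card_ffun card_ord natrX /log2 lnXn ?ltr0n // mulr_natl mulrnAl.
Qed.

Local Close Scope ereal_scope.
Local Close Scope classical_set_scope.
Unset Implicit Arguments.
Set Strict Implicit.

Theorem theorem13 (R : realType) (gT : finGroupType) (n : nat)
    (p : {ffun 'I_n -> gT} -> {ffun 'I_n -> gT} -> R) :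
  (0 < n)%N ->
  is_pmf p ->
  (forall x y, 0 < p x y) ->
  (forall P : protocol {ffun 'I_n -> gT} {ffun 'I_n -> gT} {ffun 'I_n -> gT} R,
     secure p (@group_add gT n) P ->
     ((n%:R * log2 (#|gT|%:R))%:E <= entropy (joint p P) (@oM12 _ _ _))%E /\
     ((n%:R * log2 (#|gT|%:R))%:E <= entropy (joint p P) (@oM23 _ _ _))%E /\
     ((n%:R * log2 (#|gT|%:R))%:E <= entropy (joint p P) (@oM31 _ _ _))%E) /\
  ((n%:R * log2 (#|gT|%:R))%:E <= rho p (@group_add gT n))%E.
Proof.
move=> _ p_pmf p_gt0.
have add_injr := @group_add_injr gT n; have add_injl := @group_add_injl gT n.
rewrite -log2_card_ffun; last by apply/card_gt0P; exists 1%g.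
split=> [P P_secure|].
  exact: secure_entropy_messages_ge add_injr add_injl p_pmf p_gt0 P_secure.
apply: le_ereal_inf_tmp => _ [P P_secure <-].
exact: secure_views_entropy_ge add_injr add_injl p_pmf p_gt0 P_secure.
Qed.
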